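(* Let $\mathbb{G}$ be the class of DAGs on $V$. For a distribution $P$ and a DAG $G$ on $V$, each of the following statements implies the next: (1) $P$ is minimally Markovian w.r.t. $G$; (2) $G$ is a sparsest Markov graph of $P$; (3) $P$ is Pearl-minimal to $G$; (4) $P$ is causally minimal to $G$.
   Context: $J(P)$ denotes the set of conditional independence triples $(A,B,C)$ (disjoint subsets of $V$, $A\perp\!\!\!\perp B\mid C$) of $P$, and $J(G)$ the set of d-separation triples of the DAG $G$. $P$ is Markovian to $G$ if $J(G)\subseteq J(P)$. The skeleton $\mathrm{sk}(G)$ is the undirected graph obtained by removing arrowheads; $\mathrm{sk}(P)$ is the undirected graph on $V$ in which $i,j$ are adjacent iff there is no $C\subseteq V\setminus\{i,j\}$ with $i\perp\!\!\!\perp j\mid C$. $P$ is adjacency faithful w.r.t. $G$ if $\mathrm{sk}(P)=\mathrm{sk}(G)$; $P$ is minimally Markovian w.r.t. $G$ if $P$ is Markovian to $G$ and adjacency faithful w.r.t. $G$. With $|E(G)|$ the number of edges, $G\in\mathbb{G}$ is a sparsest Markov graph of $P$ if $P$ is Markovian to $G$ and $|E(G)|\le|E(G')|$ for all $G'\in\mathbb{G}$ to which $P$ is Markovian. $P$ is Pearl-minimal to $G\in\mathbb{G}$ if there is no $G'\in\mathbb{G}$ with $J(G)\subsetneq J(G')\subseteq J(P)$. $P$ is causally minimal to $G\in\mathbb{G}$ if $P$ is Markovian to $G$ and not Markovian to any proper subgraph $G'\in\mathbb{G}$ of $G$.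
   Formalization: P being Pearl-minimal to G also includes P being Markovian to G, besides the absence of any G′ ∈ 𝔾 with J(G) ⊊ J(G′) ⊆ J(P). The statement above fails without it. *)

From mathcomp Require Import all_boot.

Set Implicit Arguments.
Unset Strict Implicit.
Unset Printing Implicit Defensive.

(* Vertex set V : finType.  A directed graph on V is its set of directed
   edges E : {set V * V}; (x, y) \in E means x -> y. *)

Definition edge_rel (V : finType) (E : {set V * V}) : rel V :=
  fun x y => (x, y) \in E.

(* DAG: no edge x -> y such that y reaches x by a directed path
   (this excludes self-loops and all directed cycles). *)
Definition is_dag (V : finType) (E : {set V * V}) : Prop :=
  forall x y : V, (x, y) \in E -> ~~ connect (edge_rel E) y x.

Definition adjG (V : finType) (E : {set V * V}) : rel V :=
  fun x y => ((x, y) \in E) || ((y, x) \in E).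

(* The walk s = [:: a; ...] is active given C: every internal vertex m with
   neighbours x, y on the walk is either a collider (x -> m <- y) having
   itself or a descendant in C, or a non-collider not in C. *)
Definition active_path (V : finType) (E : {set V * V}) (C : {set V})
    (a : V) (s : seq V) : Prop :=
  forall i : nat, 0 < i -> i.+1 < size s ->
    let x := nth a s i.-1 in
    let m := nth a s i in
    let y := nth a s i.+1 in
    if ((x, m) \in E) && ((y, m) \in E)
    then exists c, c \in C /\ connect (edge_rel E) m c
    else m \notin C.

Definition dconnected (V : finType) (E : {set V * V}) (C : {set V})
    (a b : V) : Prop :=
  exists p : seq V,
    [/\ path (adjG E) a p, last a p = b, uniq (a :: p) &
        active_path E C a (a :: p)].

Definition dsep (V : finType) (E : {set V * V}) (A B C : {set V}) : Prop :=
  forall a b, a \in A -> b \in B -> ~ dconnected E C a b.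

Definition disjoint3 (V : finType) (A B C : {set V}) : Prop :=
  [/\ [disjoint A & B], [disjoint A & C] & [disjoint B & C]].

Definition triples (V : finType) := {set V} -> {set V} -> {set V} -> Prop.

Definition ci_relation (V : finType) := triples V.

Definition JP (V : finType) (P : ci_relation V) : triples V :=
  fun A B C => disjoint3 A B C /\ P A B C.

Definition JG (V : finType) (E : {set V * V}) : triples V :=
  fun A B C => disjoint3 A B C /\ dsep E A B C.

Definition incl (V : finType) (J1 J2 : triples V) : Prop :=
  forall A B C, J1 A B C -> J2 A B C.

Definition strict_incl (V : finType) (J1 J2 : triples V) : Prop :=
  incl J1 J2 /\ exists A B C, J2 A B C /\ ~ J1 A B C.

Definition markovian (V : finType) (P : ci_relation V) (E : {set V * V}) :=
  incl (JG E) (JP P).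

Definition skP (V : finType) (P : ci_relation V) (i j : V) : Prop :=
  i != j /\ ~ exists C : {set V}, C \subset ~: [set i; j] /\
                                  JP P [set i] [set j] C.

Definition adjacency_faithful (V : finType) (P : ci_relation V)
    (E : {set V * V}) : Prop :=
  forall i j : V, adjG E i j <-> skP P i j.

Definition minimally_markovian (V : finType) (P : ci_relation V)
    (E : {set V * V}) : Prop :=
  markovian P E /\ adjacency_faithful P E.

Definition sparsest_markov (V : finType) (P : ci_relation V)
    (E : {set V * V}) : Prop :=
  is_dag E /\ markovian P E /\
  forall E' : {set V * V}, is_dag E' -> markovian P E' -> #|E| <= #|E'|.

Definition pearl_minimal (V : finType) (P : ci_relation V)
    (E : {set V * V}) : Prop :=
  markovian P E /\
  ~ exists E' : {set V * V},
      [/\ is_dag E', strict_incl (JG E) (JG E') & incl (JG E') (JP P)].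

Definition causally_minimal (V : finType) (P : ci_relation V)
    (E : {set V * V}) : Prop :=
  markovian P E /\
  forall E' : {set V * V}, is_dag E' -> E' \proper E -> ~ markovian P E'.

From mathcomp Require Import all_boot zify.

Set Implicit Arguments.
Unset Strict Implicit.
Unset Printing Implicit Defensive.

(* (1) -> (2): every DAG to which P is Markovian has all adjacencies of sk(P),
   which under adjacency faithfulness are those of G; so it has at least as
   many edges as G.
   (2) -> (3): if J(G) is strictly contained in J(G') and G' is Markovian,
   then every adjacency of G' is one of G, and sparsity forces the skeletons
   to agree. The separating sets built from parents show that G and G' also
   share their v-structures, so they are Markov equivalent; by Chickering's
   theorem G' is obtained from G by reversing covered edges, none of which
   changes the d-separations, whence J(G') = J(G).
   (3) -> (4): removing edges only adds d-separations, and removing an edge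
   u -> v adds the separation of u from v by the parents of one of them.
   d-connection is handled through walks whose colliders lie in C and whose
   other vertices avoid C; these are what a covered edge reversal transports. *)

Section DagFacts.
Variable V : finType.
Implicit Types (E : {set V * V}) (u v : V).

Lemma adjG_sym E : symmetric (adjG E).
Proof. by move=> u v; rewrite /adjG orbC. Qed.

Variables (E : {set V * V}) (dagE : is_dag E).

Lemma dag_irrefl u : (u, u) \notin E.
Proof. by apply/negP => /dagE; rewrite connect0. Qed.

Lemma dag_asym u v : (u, v) \in E -> (v, u) \notin E.
Proof. by move=> /dagE huv; apply/negP => /(@connect1 _ (edge_rel E)); apply/negP. Qed.

Lemma dag_adj_neq u v : adjG E u v -> u != v.
Proof. by apply: contraL => /eqP ->; rewrite /adjG orbb dag_irrefl. Qed.

Lemma dag_connect_antisym u v :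
  connect (edge_rel E) u v -> connect (edge_rel E) v u -> u = v.
Proof.
case/connectP=> [[|w p]] //= /andP [huw hp] -> hvu.
have /negP[] := dagE huw; apply: connect_trans hvu.
by apply/connectP; exists p.
Qed.

Definition ancestors v : {set V} := [set w | connect (edge_rel E) w v].

Lemma card_ancestors_lt u v :
  connect (edge_rel E) u v -> u != v -> #|ancestors u| < #|ancestors v|.
Proof.
move=> huv neq_uv; apply: proper_card; apply/properP; split.
  by apply/subsetP => w; rewrite !inE => hwu; exact: connect_trans hwu huv.
exists v; rewrite !inE ?connect0 //; apply: contra neq_uv => hvu.
by rewrite (dag_connect_antisym huv hvu).
Qed.

Lemma card_ancestors_edge u v : (u, v) \in E -> #|ancestors u| < #|ancestors v|.
Proof.
move=> huv; apply: card_ancestors_lt; first exact: connect1.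
by apply: dag_adj_neq; rewrite /adjG huv.
Qed.

End DagFacts.

Lemma dag_of_rank (V : finType) (E : {set V * V}) (rk : V -> nat) :
  (forall u v, (u, v) \in E -> rk u < rk v) -> is_dag E.
Proof.
move=> rk_edge a b hab; apply/negP => /connectP [p hp hl].
suff: rk b <= rk (last b p) by rewrite -hl leqNgt rk_edge.
elim: p b hp {hab hl} => //= z p IH w /andP [hwz hp].
exact: leq_trans (ltnW (rk_edge _ _ hwz)) (IH _ hp).
Qed.

Section EdgeCount.
Variables (V : finType) (E E' : {set V * V}).
Hypothesis dagE : is_dag E.
Hypothesis adj_sub : forall u v, adjG E u v -> adjG E' u v.

(* Each edge of E is sent to the edge of E' with the same endpoints. *)
Let orient (e : V * V) : V * V := if e \in E' then e else (e.2, e.1).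

Let orient_inj : {in E &, injective orient}.
Proof.
move=> [u v] [u' v'] he he'; rewrite /orient.
case: ifP => _; case: ifP => _ //= [eu ev]; subst => //.
all: by rewrite (negbTE (dag_asym dagE he)) in he'.
Qed.

Let orient_sub : [set orient e | e in E] \subset E'.
Proof.
apply/subsetP => _ /imsetP [[u v] he ->]; rewrite /orient.
case: ifP => // hn; have := adj_sub (u := u) (v := v).
by rewrite /adjG he hn => /(_ isT).
Qed.

Lemma card_le_of_adj_sub : #|E| <= #|E'|.
Proof. by rewrite -(card_in_imset orient_inj); exact: subset_leq_card. Qed.

Lemma adj_sub_of_card_le : #|E'| <= #|E| -> forall u v, adjG E' u v -> adjG E u v.
Proof.
move=> hle.
have im_orient : [set orient e | e in E] = E'.
  by apply/eqP; rewrite eqEcard orient_sub (card_in_imset orient_inj) hle.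
suff in_adj u v : (u, v) \in E' -> adjG E u v.
  by move=> u v /orP [] /in_adj //; rewrite adjG_sym.
rewrite -im_orient => /imsetP [[u' v'] he]; rewrite /orient.
by case: ifP => _ [-> ->]; rewrite /adjG he ?orbT.
Qed.

End EdgeCount.

Section ActiveWalks.
Variable V : finType.
Implicit Types (E : {set V * V}) (C : {set V}) (col : pred V).

(* [into] records whether the edge just traversed points into [u]; a collider
   must satisfy [col], any other vertex must avoid [C]. The last vertex of a
   walk is unconstrained. *)
Definition active_step E col C (into : bool) (u n : V) : bool :=
  if into && ((n, u) \in E) then col u else u \notin C.

Fixpoint active_walk E col C (into : bool) (u : V) (s : seq V) : bool :=
  if s is n :: s' then
    [&& adjG E u n, active_step E col C into u n
      & active_walk E col C ((u, n) \in E) n s']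
  else true.

Lemma active_walk_cons E col C into u n s :
  active_walk E col C into u (n :: s) =
  [&& adjG E u n, active_step E col C into u n
    & active_walk E col C ((u, n) \in E) n s].
Proof. by []. Qed.

Definition desc_in E C : pred V :=
  fun u => [exists c in C, connect (edge_rel E) u c].

Lemma desc_inP E C u :
  reflect (exists c, c \in C /\ connect (edge_rel E) u c) (desc_in E C u).
Proof.
apply: (iffP existsP) => [[c /andP [hc huc]]|[c [hc huc]]]; exists c => //.
by rewrite hc.
Qed.

Lemma desc_in_self E C u : u \in C -> desc_in E C u.
Proof. by move=> hu; apply/desc_inP; exists u; rewrite connect0. Qed.

Lemma desc_in_connect E C u v :
  connect (edge_rel E) u v -> desc_in E C v -> desc_in E C u.
Proof.
move=> huv /desc_inP [c [hc hvc]]; apply/desc_inP; exists c.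
by rewrite hc (connect_trans huv hvc).
Qed.

Lemma active_walk_path E col C into u s :
  active_walk E col C into u s -> path (adjG E) u s.
Proof. by elim: s into u => //= n s IH into u /and3P [-> _ /IH]. Qed.

Lemma active_walk_mono E col col' C into u s : {subset col <= col'} ->
  active_walk E col C into u s -> active_walk E col' C into u s.
Proof.
move=> sub_col; elim: s into u => //= n s IH into u /and3P [-> hstep /IH ->].
by move: hstep; rewrite /active_step andbT; case: ifP => // _ /sub_col.
Qed.

Lemma active_walk_cat E col C into u s1 n s2 :
  active_walk E col C into u (s1 ++ n :: s2) =
  active_walk E col C into u (rcons s1 n)
  && active_walk E col C ((last u s1, n) \in E) n s2.
Proof.
elim: s1 into u => [|m s1 IH] into u /=; first by rewrite andbT !andbA.
by rewrite IH !andbA.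
Qed.

Lemma active_path_cons3 E C a x u n s :
  active_path E C a [:: x, u, n & s] <->
  active_step E (desc_in E C) C ((x, u) \in E) u n
  /\ active_path E C a [:: u, n & s].
Proof.
have stepP : (if ((x, u) \in E) && ((n, u) \in E)
              then exists c, c \in C /\ connect (edge_rel E) u c
              else u \notin C) <-> active_step E (desc_in E C) C ((x, u) \in E) u n.
  by rewrite /active_step; case: ifP => _ //; split => /desc_inP.
split=> [act|[/stepP act_u act]].
  split; first by apply/stepP; exact: act 1 isT isT.
  by move=> i i_gt0 lt_i; have := act i.+1 isT lt_i; case: i i_gt0 lt_i.
by move=> [|[|i]] // _ lt_i; have := act i.+1 isT lt_i.
Qed.

Lemma active_path_walk E C a x u s : path (adjG E) u s ->
  active_path E C a [:: x, u & s] <->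
  active_walk E (desc_in E C) C ((x, u) \in E) u s.
Proof.
elim: s x u => [|n s IH] x u /=; first by split=> // _ [|[|i]].
case/andP=> adj_un /IH IHs; rewrite active_path_cons3 IHs /= adj_un /=.
by split=> [[-> ->]|/andP [-> ->]].
Qed.

Lemma dconnected_walkP E C a b : a \notin C ->
  dconnected E C a b <->
  exists s, [/\ active_walk E (desc_in E C) C false a s, last a s = b
              & uniq (a :: s)].
Proof.
move=> aC; split=> [[p [hp hl hu act]]|[p [act hl hu]]]; exists p; split => //.
- case: p hp act {hl hu} => //= u s /andP [-> hs] /(active_path_walk _ _ _ hs) ->.
  by rewrite /active_step aC.
- exact: active_walk_path act.
- case: p act {hl hu} => [_ [|[|i]]|u s] //= /and3P [_ _ act].
  by apply/active_path_walk => //; exact: active_walk_path act.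
Qed.

Lemma active_path_rev E C a b l : active_path E C a l -> active_path E C b (rev l).
Proof.
move=> act i i_gt0; rewrite size_rev => lt_i.
set k := size l - i.+1.
have := act k ltac:(rewrite /k; lia) ltac:(rewrite /k; lia) => /=.
have nth_ab j : j < size l -> nth b l j = nth a l j by move=> hj; apply: set_nth_default.
rewrite !nth_rev ?size_rev; try lia.
rewrite !nth_ab; try lia.
have -> : size l - i.-1.+1 = k.+1 by rewrite /k; lia.
have -> : size l - i.+2 = k.-1 by rewrite /k; lia.
by rewrite andbC.
Qed.

Lemma dconnected_sym E C a b : dconnected E C a b -> dconnected E C b a.
Proof.
case=> p [hp hl hu act].
have rev_p : b :: rev (belast a p) = rev (a :: p).
  by rewrite [a :: p]lastI rev_rcons hl.
exists (rev (belast a p)); split.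
- by rewrite -hl rev_path; apply: sub_path hp => x y; rewrite adjG_sym.
- by rewrite -[LHS]/(last b (b :: _)) rev_p rev_cons last_rcons.
- by rewrite rev_p rev_uniq.
- by rewrite rev_p; exact: active_path_rev act.
Qed.

Lemma dconnected_edge E C u v : (u, v) \in E -> u != v -> dconnected E C u v.
Proof.
move=> huv neq_uv; exists [:: v]; split => //=; last by move=> [|[|i]].
- by rewrite /adjG huv.
- by rewrite inE neq_uv.
Qed.

Lemma active_walk_into_notin E col C u s :
  u \notin C -> active_walk E col C true u s -> active_walk E col C false u s.
Proof. by case: s => //= n s uC /and3P [-> _ ->]; rewrite /active_step uC. Qed.

Definition reach_by E C into u b :=
  exists s, active_walk E [in C] C into u s /\ last u s = b.

Lemma reach_by_nil E C into u : reach_by E C into u u.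
Proof. by exists [::]. Qed.

Lemma reach_by_cons E C into u n b :
  adjG E u n -> active_step E [in C] C into u n ->
  reach_by E C ((u, n) \in E) n b -> reach_by E C into u b.
Proof. by move=> adj step [s [act <-]]; exists (n :: s); rewrite /= adj step act. Qed.

Lemma dconnected_via E C a c b :
  adjG E a c -> adjG E c b -> a != c -> c != b -> a != b ->
  (if ((a, c) \in E) && ((b, c) \in E) then desc_in E C c else c \notin C) ->
  dconnected E C a b.
Proof.
move=> ac cb nac ncb nab hc; exists [:: c; b]; split => //=.
- by rewrite ac cb.
- by rewrite !inE negb_or nac nab ncb.
- by apply/active_path_cons3; split; last by move=> [|[|i]].
Qed.

End ActiveWalks.

Section WalkSurgery.
Variables (V : finType) (E : {set V * V}) (C : {set V}).
Hypothesis dagE : is_dag E.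

Local Notation dwalk := (active_walk E (desc_in E C) C).
Local Notation cwalk := (active_walk E [in C] C).

(* Leaving [w] forwards, the walk can only move down until its first collider. *)
Lemma dwalk_from_desc u t w :
  connect (edge_rel E) u w -> ~~ connect (edge_rel E) w u ->
  dwalk true w t -> u \in w :: t -> desc_in E C u.
Proof.
elim: t w => [|m t IH] w huw hwu /=.
  by move=> _; rewrite inE => /eqP ewu; rewrite -ewu connect0 in hwu.
case/and3P=> adj_wm; rewrite /active_step /=; case: ifP => hmw.
  by move=> col_w _ _; exact: desc_in_connect huw col_w.
have hwm : (w, m) \in E by move: adj_wm; rewrite /adjG hmw orbF.
rewrite hwm => _ act; rewrite inE => /predU1P [ewu|]; first by rewrite -ewu connect0 in hwu.
apply: IH act; first exact: connect_trans huw (connect1 hwm).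
by apply: contra hwu; apply: connect_trans; exact: connect1.
Qed.

Lemma dwalk_uniq into u s : dwalk into u s ->
  exists s', [/\ dwalk into u s', last u s' = last u s & uniq (u :: s')].
Proof.
elim: s into u => [|v s IH] into u /=; first by exists [::].
case/and3P=> adj_uv step_uv /IH [s1 [act1 <- uniq1]].
have [u_in|u_notin] := boolP (u \in v :: s1); last first.
  by exists (v :: s1); rewrite /= adj_uv step_uv act1 u_notin.
have {}u_in : u \in s1 by move: u_in; rewrite inE (negbTE (dag_adj_neq dagE adj_uv)).
case/splitPr: u_in act1 uniq1 => t1 t2; rewrite active_walk_cat => /andP [act_t1 act_t2] uniq1.
exists t2; split; last 2 first.
- by rewrite last_cat.
- by move: uniq1; rewrite -cat_cons cat_uniq => /and3P [].
case: t2 act_t2 {uniq1} => [|w t3] //= /and3P [adj_uw step_uw ->].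
rewrite adj_uw andbT /active_step.
case: ifP => [/andP [into_true _]|hnc].
  move: step_uv; rewrite /active_step into_true; case hvu: ((v, u) \in E) => //.
  have huv : (u, v) \in E by move: adj_uv; rewrite /adjG hvu orbF.
  move=> _; apply: (dwalk_from_desc (t := rcons t1 u) (connect1 huv)).
  - exact: dagE huv.
  - by move: act_t1; rewrite huv.
  - by rewrite inE mem_rcons inE eqxx orbT.
move: step_uv; rewrite /active_step; case: ifP => // /andP [into_true _] _.
rewrite into_true /= in hnc.
by move: step_uw; rewrite /active_step hnc andbF.
Qed.

(* A collider outside [C] is replaced by a detour down to [C] and back. *)
Lemma collider_detour into u p : path (edge_rel E) u p -> last u p \in C ->
  u \notin C -> exists d, forall s, cwalk false u s -> cwalk into u (d ++ s).
Proof.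
elim: p u into => [|z p IH] u into /=; first by move=> _ ->.
case/andP=> huz hp hl uC; have {}huz : (u, z) \in E := huz.
have hzu := negbTE (dag_asym dagE huz).
have [zC|zC] := boolP (z \in C).
  exists [:: z; u] => s act /=.
  by rewrite /adjG /active_step hzu huz andbF uC zC.
have [d hd] := IH z true hp hl zC.
exists (z :: d ++ [:: u]) => s act; rewrite /= -catA /=.
rewrite /adjG huz /active_step hzu andbF uC /=; apply: hd => /=.
by rewrite /adjG /active_step huz orbT hzu /= zC.
Qed.

Lemma dwalk_cwalk into u s : dwalk into u s ->
  exists s', cwalk into u s' /\ last u s' = last u s.
Proof.
elim: s into u => [|n s IH] into u /=; first by exists [::].
case/and3P=> adj_un step_un /IH [s1 [act1 hl1]].
have [collider|noncollider] := boolP (into && ((n, u) \in E)); last first.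
  exists (n :: s1); rewrite /= adj_un act1 andbT.
  by move: step_un; rewrite /active_step (negbTE noncollider).
move: step_un; rewrite /active_step collider => col_u.
have [uC|uC] := boolP (u \in C).
  by exists (n :: s1); rewrite /= adj_un act1 /active_step collider uC.
case/desc_inP: col_u => c [cC /connectP [p hp hlp]]; rewrite hlp in cC.
have [d hd] := collider_detour into hp cC uC.
exists (d ++ n :: s1); split; last by rewrite last_cat.
by apply: hd; rewrite /= adj_un /active_step /= uC act1.
Qed.

Lemma dconnected_cwalkP a b : a \notin C ->
  dconnected E C a b <-> exists s, cwalk false a s /\ last a s = b.
Proof.
move=> aC; rewrite dconnected_walkP //; split.
  by case=> s [/dwalk_cwalk [s' [act <-]] <- _]; exists s'.
case=> s [/(active_walk_mono (@desc_in_self _ E C)) /dwalk_uniq [s' [act hl hu]] <-].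
by exists s'.
Qed.

End WalkSurgery.

Section Subgraph.
Variables (V : finType) (E E' : {set V * V}).
Hypotheses (dagE : is_dag E) (subE : E' \subset E).

Lemma subgraph_edgeE u v : adjG E' u v -> ((u, v) \in E') = ((u, v) \in E).
Proof.
case: (boolP ((u, v) \in E')) => [/(subsetP subE) -> //|huv].
rewrite /adjG (negbTE huv) /= => /(subsetP subE) hvu.
by rewrite (negbTE (dag_asym dagE hvu)).
Qed.

Lemma active_walk_subgraph col C into u s :
  active_walk E' col C into u s -> active_walk E col C into u s.
Proof.
elim: s into u => //= n s IH into u /and3P [adj' step /IH act].
have adj : adjG E u n by case/orP: adj' => /(subsetP subE) h; rewrite /adjG h ?orbT.
rewrite adj -(subgraph_edgeE adj') act andbT.
by rewrite /active_step -(subgraph_edgeE (v := u)) // adjG_sym.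
Qed.

Lemma dconnected_subgraph (C : {set V}) a b : is_dag E' -> a \notin C ->
  dconnected E' C a b -> dconnected E C a b.
Proof.
move=> dagE' aC /(dconnected_cwalkP dagE' _ aC) [s [act hl]].
by apply/(dconnected_cwalkP dagE _ aC); exists s; rewrite (active_walk_subgraph act).
Qed.

End Subgraph.

Section ParentSeparation.
Variables (V : finType) (E : {set V * V}).
Hypothesis dagE : is_dag E.

Definition parents u : {set V} := [set z | (z, u) \in E].

(* A collider would be a descendant of [u] and an ancestor of a parent of [u]. *)
Lemma walk_from_desc_stays_desc u s w : connect (edge_rel E) u w ->
  active_walk E (desc_in E (parents u)) (parents u) true w s ->
  connect (edge_rel E) u (last w s).
Proof.
elim: s w => //= m s IH w huw /and3P [adj_wm]; rewrite /active_step /=.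
case: ifP => hmw.
  case/desc_inP=> c [/[!inE] hcu hwc].
  by have /negP[] := dagE hcu; exact: connect_trans huw hwc.
have hwm : (w, m) \in E by move: adj_wm; rewrite /adjG hmw orbF.
by rewrite hwm => _; apply: IH; exact: connect_trans huw (connect1 hwm).
Qed.

Lemma parents_dsep a b : ~~ adjG E a b -> ~~ connect (edge_rel E) a b ->
  ~ dconnected E (parents a) a b.
Proof.
move=> nadj nconn.
have aC : a \notin parents a by rewrite inE dag_irrefl.
case/(dconnected_walkP _ _ aC) => [[|n s] [/= act hl _]].
  by rewrite -hl connect0 in nconn.
case/and3P: act => adj_an _ act.
case han: ((a, n) \in E); rewrite han in act.
  by have := walk_from_desc_stays_desc (connect1 han) act; rewrite hl (negbTE nconn).
have hna : (n, a) \in E by move: adj_an; rewrite /adjG han.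
case: s act hl => [_ hl|m s /= /and3P [_]]; first by rewrite -hl /adjG hna orbT in nadj.
by rewrite /active_step /= inE hna.
Qed.

Definition sepset a b : {set V} :=
  if connect (edge_rel E) a b then parents b else parents a.

Lemma parents_sub a b : ~~ adjG E a b -> parents a \subset ~: [set a; b].
Proof.
move=> nadj; apply/subsetP => z; rewrite !inE => hz.
apply/negP => /orP [] /eqP ez; subst z; first by rewrite (negbTE (dag_irrefl dagE a)) in hz.
by rewrite /adjG hz orbT in nadj.
Qed.

Lemma sepset_sub a b : ~~ adjG E a b -> sepset a b \subset ~: [set a; b].
Proof.
move=> nadj; rewrite /sepset; case: ifP => _; last exact: parents_sub.
by rewrite setUC; apply: parents_sub; rewrite adjG_sym.
Qed.

Lemma sepset_dsep a b : a != b -> ~~ adjG E a b -> ~ dconnected E (sepset a b) a b.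
Proof.
move=> neq_ab nadj; rewrite /sepset; case: ifP => hab; last first.
  by apply: parents_dsep; rewrite ?hab.
move=> /dconnected_sym; apply: parents_dsep; first by rewrite adjG_sym.
by apply: contra neq_ab => hba; rewrite (dag_connect_antisym dagE hab hba).
Qed.

Lemma sepset_collider a c b : adjG E a c -> adjG E c b ->
  (c \in sepset a b) = ~~ (((a, c) \in E) && ((b, c) \in E)).
Proof.
move=> ac cb; rewrite /sepset; case: ifP => hab; rewrite inE.
  case/orP: ac => [hac|hca]; case/orP: cb => [hcb|hbc].
  - by rewrite hcb (negbTE (dag_asym dagE hcb)) andbF.
  - by rewrite hac hbc (negbTE (dag_asym dagE hbc)).
  - by rewrite hcb (negbTE (dag_asym dagE hca)).
  - by have /negP[] := dagE hca; exact: connect_trans hab (connect1 hbc).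
case/orP: ac => [hac|hca]; last by rewrite hca (negbTE (dag_asym dagE hca)).
case/orP: cb => [hcb|hbc]; last by rewrite hac hbc (negbTE (dag_asym dagE hac)).
by rewrite (connect_trans (connect1 hac) (connect1 hcb)) in hab.
Qed.

End ParentSeparation.

Section PairTriples.
Variable V : finType.
Implicit Types (E : {set V * V}) (C : {set V}).

Lemma dsep_pair E C u v : dsep E [set u] [set v] C <-> ~ dconnected E C u v.
Proof.
split; first by apply; rewrite inE.
by move=> hd a b /set1P -> /set1P ->.
Qed.

Lemma JG_pair E C u v : u != v -> C \subset ~: [set u; v] ->
  ~ dconnected E C u v -> JG E [set u] [set v] C.
Proof.
move=> neq_uv sub_C /dsep_pair hd; split => //.
have [uC vC] : u \notin C /\ v \notin C.
  by split; apply/negP => /(subsetP sub_C); rewrite !inE eqxx ?orbT.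
by split; rewrite disjoints1 ?inE.
Qed.

Lemma JG_sepset E u v : is_dag E -> u != v -> ~~ adjG E u v ->
  JG E [set u] [set v] (sepset E u v).
Proof.
move=> dagE neq_uv nadj.
by apply: JG_pair; [|exact: sepset_sub|exact: sepset_dsep].
Qed.

Lemma adj_of_JG_incl E E' u v : is_dag E -> incl (JG E) (JG E') ->
  u != v -> adjG E' u v -> adjG E u v.
Proof.
move=> dagE hinc neq_uv adj'; apply/negPn/negP => nadj.
have [_ /dsep_pair []] := hinc _ _ _ (JG_sepset dagE neq_uv nadj).
case/orP: adj' => h; first exact: dconnected_edge.
by apply: dconnected_sym; apply: dconnected_edge; rewrite 1?eq_sym.
Qed.

End PairTriples.

Section MarkovEquivalence.
Variable V : finType.
Implicit Types E : {set V * V}.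

Definition vstructure E (a c b : V) :=
  [&& (a, c) \in E, (b, c) \in E, a != b & ~~ adjG E a b].

Lemma vstructureC E a c b : vstructure E a c b = vstructure E b c a.
Proof.
rewrite /vstructure adjG_sym eq_sym.
by case: ((a, c) \in E); case: ((b, c) \in E).
Qed.

Definition markov_equiv E E' :=
  (forall u v, adjG E u v = adjG E' u v)
  /\ (forall a c b, vstructure E a c b = vstructure E' a c b).

Lemma markov_equiv_trans E1 E2 E3 :
  markov_equiv E1 E2 -> markov_equiv E2 E3 -> markov_equiv E1 E3.
Proof. by case=> h1 h2 [h3 h4]; split => *; rewrite ?h1 ?h2 ?h3 ?h4. Qed.

End MarkovEquivalence.

Definition reverse_edge (V : finType) (E : {set V * V}) x y : {set V * V} :=
  (E :\ (x, y)) :|: [set (y, x)].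

Section CoveredEdge.
Variables (V : finType) (E : {set V * V}) (x y : V).
Hypotheses (dagE : is_dag E) (hxy : (x, y) \in E).
Hypothesis covered : forall z, ((z, y) \in E) = ((z, x) \in E) || (z == x).

Local Notation E1 := (reverse_edge E x y).

Lemma covered_yx : ((y, x) \in E) = false.
Proof. exact/negbTE/dag_asym. Qed.

Lemma covered_neq : (x == y) = false.
Proof. by apply/negbTE/(dag_adj_neq dagE); rewrite /adjG hxy. Qed.

Lemma parent_x_parent_y z : (z, x) \in E -> (z, y) \in E.
Proof. by move=> hzx; rewrite covered hzx. Qed.

Lemma parent_y_parent_x z : (z, y) \in E -> z != x -> (z, x) \in E.
Proof. by rewrite covered => /orP [//|/eqP ->]; rewrite eqxx. Qed.

Lemma parent_x_neq z : (z, x) \in E -> (z != x) && (z != y).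
Proof.
move=> hzx; apply/andP; split; apply: contraTneq hzx => ->.
  exact: dag_irrefl.
by rewrite covered_yx.
Qed.

Definition on_xy (a b : V) := ((a, b) == (x, y)) || ((a, b) == (y, x)).

Lemma on_xyC a b : on_xy a b = on_xy b a.
Proof. by rewrite /on_xy !xpair_eqE orbC; congr (_ || _); exact: andbC. Qed.

Lemma on_xy_l a b : a != x -> a != y -> on_xy a b = false.
Proof. by move=> /negbTE ax /negbTE ay; rewrite /on_xy !xpair_eqE ax ay. Qed.

Lemma on_xy_refl a : on_xy a a = false.
Proof.
rewrite /on_xy !xpair_eqE; apply/negbTE; rewrite negb_or.
by apply/andP; split; apply: contraFN covered_neq => /andP [/eqP <- /eqP ->].
Qed.

Lemma on_xy_y b : on_xy y b = (b == x).
Proof. by rewrite /on_xy !xpair_eqE eq_sym covered_neq eqxx. Qed.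

Lemma reverse_xy : ((x, y) \in E1) = false.
Proof. by rewrite !inE !xpair_eqE !eqxx covered_neq eq_sym covered_neq. Qed.

Lemma reverse_yx : (y, x) \in E1.
Proof. by rewrite !inE eqxx orbT. Qed.

Lemma reverse_edgeE a b : ~~ on_xy a b -> ((a, b) \in E1) = ((a, b) \in E).
Proof.
rewrite /on_xy !inE negb_or => /andP [/negbTE -> /negbTE ->].
by rewrite orbF.
Qed.

Lemma reverse_edgeEl a b : a != x -> a != y -> ((a, b) \in E1) = ((a, b) \in E).
Proof. by move=> ax ay; rewrite reverse_edgeE // on_xy_l. Qed.

Lemma reverse_edgeEr a b : b != x -> b != y -> ((a, b) \in E1) = ((a, b) \in E).
Proof. by move=> bx bY; rewrite reverse_edgeE // on_xyC on_xy_l. Qed.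

Lemma adj_reverse a b : adjG E1 a b = adjG E a b.
Proof.
rewrite /adjG; case: (boolP (on_xy a b)) => [|hab].
  by case/orP=> /eqP [-> ->]; rewrite reverse_xy reverse_yx hxy covered_yx.
by rewrite !reverse_edgeE // on_xyC.
Qed.

(* [y] is placed just below [x] in the ancestor ranking of [E]. *)
Lemma reverse_dag : is_dag E1.
Proof.
pose rk z := if z == y then (#|ancestors E x|).*2.+1 else (#|ancestors E z|).*2.+2.
apply: (@dag_of_rank _ _ rk) => a b.
rewrite !inE !xpair_eqE => /orP [/andP [nxy hab]|/andP [/eqP -> /eqP ->]]; last first.
  by rewrite /rk eqxx covered_neq.
have hr := card_ancestors_edge dagE hab.
rewrite /rk; case: (a =P y) => [ea|na]; case: (b =P y) => [eb|nb].
- by subst; rewrite (negbTE (dag_irrefl dagE y)) in hab.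
- by subst a; move: (card_ancestors_edge dagE hxy) hr; lia.
- subst b; have ax : a != x by apply: contra nxy => ->; rewrite eqxx.
  by move: (card_ancestors_edge dagE (parent_y_parent_x hab ax)); lia.
- by move: hr; lia.
Qed.

Lemma vstructure_on_xy a c b : on_xy a c -> vstructure E a c b = false.
Proof.
case/orP=> /eqP [-> ->]; rewrite /vstructure ?covered_yx //.
apply/negbTE; apply/negP => /and4P [_ hby nxb]; apply/negP/negPn.
by rewrite /adjG parent_y_parent_x ?orbT // eq_sym.
Qed.

Lemma vstructure_reverse_on_xy a c b : on_xy a c -> vstructure E1 a c b = false.
Proof.
case/orP=> /eqP [-> ->]; rewrite /vstructure ?reverse_xy //.
apply/negbTE; apply/negP => /and4P [_ hbx nyb]; apply/negP/negPn.
have bx : b != x.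
  by apply: contraTneq hbx => ->; rewrite reverse_edgeE ?on_xy_refl ?dag_irrefl.
rewrite eq_sym in nyb; rewrite reverse_edgeEl // in hbx.
by rewrite adj_reverse /adjG parent_x_parent_y ?orbT.
Qed.

Lemma vstructure_reverse a c b : vstructure E1 a c b = vstructure E a c b.
Proof.
have [ac|nac] := boolP (on_xy a c).
  by rewrite vstructure_on_xy ?vstructure_reverse_on_xy.
have [bc|nbc] := boolP (on_xy b c).
  by rewrite vstructureC [RHS]vstructureC vstructure_on_xy ?vstructure_reverse_on_xy.
by rewrite /vstructure adj_reverse !reverse_edgeE.
Qed.

Lemma reverse_markov_equiv : markov_equiv E1 E.
Proof. by split=> *; [exact: adj_reverse|exact: vstructure_reverse]. Qed.

Section Transfer.
Variables (C : {set V}) (N : nat).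
Local Notation cwalk G := (active_walk G [in C] C).

(* Arriving at [x] or [y] along an arrow and
   leaving along the reversed edge is excluded: that situation is dealt with
   one step earlier, from the vertex the walk came from. *)
Hypothesis IH : forall into u s, size s < N -> cwalk E into u s ->
  (into -> ~~ on_xy u (head u s)) -> reach_by E1 C into u (last u s).

Lemma reach_from_x_y s : size s < N ->
  cwalk E false x (y :: s) -> reach_by E1 C false x (last y s).
Proof.
move=> hN /and3P [_]; rewrite /active_step /= hxy => xC act.
have xy_step b : reach_by E1 C false y b -> reach_by E1 C false x b.
  move=> h; apply: (reach_by_cons (n := y)); last by rewrite reverse_xy.
    by rewrite adj_reverse /adjG hxy.
  by rewrite /active_step.
case: s hN act => [|q s] /= hN; first by move=> _; apply/xy_step/reach_by_nil.
case/and3P=> adj_yq step_yq act.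
have [exq|qx] := eqVneq q x.
  by subst q; rewrite covered_yx in act; apply: (IH (ltnW hN) act).
case: (boolP ((q, y) \in E)) => hqy.
  have hqx := parent_y_parent_x hqy qx; have /andP [_ qy] := parent_x_neq hqx.
  rewrite (negbTE (dag_asym dagE hqy)) in act.
  apply: (reach_by_cons (n := q)); first by rewrite adj_reverse /adjG hqx orbT.
    by rewrite /active_step reverse_edgeEl ?covered_neq // (negbTE (dag_asym dagE hqx)).
  by rewrite reverse_edgeEr // (negbTE (dag_asym dagE hqx)); apply: (IH (ltnW hN) act).
have hyq : (y, q) \in E by move: adj_yq; rewrite /adjG (negbTE hqy) orbF.
have qy : q != y by apply: contraTneq hyq => ->; exact: dag_irrefl.
move: step_yq; rewrite /active_step (negbTE hqy) => yC.
rewrite hyq in act; apply: xy_step; apply: (reach_by_cons (n := q)).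
- by rewrite adj_reverse /adjG hyq.
- by rewrite /active_step andFb.
- by rewrite reverse_edgeEr // hyq; apply: (IH (ltnW hN) act) => _; rewrite on_xy_l.
Qed.

Lemma reach_from_y_x s : size s < N ->
  cwalk E false y (x :: s) -> reach_by E1 C false y (last x s).
Proof.
move=> hN /and3P [_]; rewrite /active_step /= covered_yx => yC act.
have yx_step b : reach_by E1 C true x b -> reach_by E1 C false y b.
  move=> h; apply: (reach_by_cons (n := x)); last by rewrite reverse_yx.
    by rewrite adj_reverse /adjG hxy orbT.
  by rewrite /active_step.
case: s hN act => [|r s] /= hN; first by move=> _; apply/yx_step/reach_by_nil.
case/and3P=> adj_xr; rewrite /active_step /= => xC act.
have [eyr|ry] := eqVneq r y.
  subst r; rewrite hxy in act.
  exact: (IH (ltnW hN) (active_walk_into_notin yC act)).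
case: (boolP ((r, x) \in E)) => hrx.
  have /andP [rx _] := parent_x_neq hrx; have hry := parent_x_parent_y hrx.
  rewrite (negbTE (dag_asym dagE hrx)) in act.
  apply: (reach_by_cons (n := r)); first by rewrite adj_reverse /adjG hry orbT.
    by rewrite /active_step.
  by rewrite reverse_edgeEr // (negbTE (dag_asym dagE hry)); apply: (IH (ltnW hN) act).
have hxr : (x, r) \in E by move: adj_xr; rewrite /adjG (negbTE hrx) orbF.
have rx : r != x by apply: contraTneq hxr => ->; exact: dag_irrefl.
rewrite hxr in act; apply: yx_step; apply: (reach_by_cons (n := r)).
- by rewrite adj_reverse /adjG hxr.
- by rewrite /active_step reverse_edgeEl // (negbTE hrx).
- by rewrite reverse_edgeEr // hxr; apply: (IH (ltnW hN) act) => _; rewrite on_xy_l.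
Qed.

Lemma reach_step into u v s : size s < N -> ~~ on_xy u v ->
  ((u, v) \in E -> ~~ on_xy v (head v s)) ->
  cwalk E into u (v :: s) -> reach_by E1 C into u (last v s).
Proof.
move=> hN nxy entry /and3P [adj step act].
apply: (reach_by_cons (n := v)); first by rewrite adj_reverse.
  by move: step; rewrite /active_step reverse_edgeE // on_xyC.
by rewrite reverse_edgeE //; apply: (IH _ act).
Qed.

(* A walk entering [x] from a parent [u] and going on to [y] can use [u -> y]
   instead, unless it comes straight back to [x]: then [y] is a collider in
   [C] and [u -> y <- x] already does the job. *)
Lemma reach_through_x_y into u s : (size s).+1 < N -> (u, x) \in E ->
  cwalk E into u [:: x, y & s] -> reach_by E1 C into u (last y s).
Proof.
move=> hN hux; rewrite !active_walk_cons hux hxy => /and5P [_ step_ux _ step_xy act].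
have /andP [ux uy] := parent_x_neq hux; have huy := parent_x_parent_y hux.
have nyu := negbTE (dag_asym dagE huy).
move: step_ux step_xy; rewrite /active_step (negbTE (dag_asym dagE hux)).
rewrite covered_yx !andbF => uC xC.
have via_y : head y s != x -> reach_by E1 C into u (last y s).
  move=> hx; apply: (reach_by_cons (n := y)); first by rewrite adj_reverse /adjG huy.
    by rewrite /active_step reverse_edgeEr // nyu andbF.
  by rewrite reverse_edgeEl // huy; apply: (IH (ltnW hN) act) => _; rewrite on_xy_y.
case: s hN act via_y => [|q s] hN act via_y.
  by apply: via_y; rewrite eq_sym covered_neq.
have [eqx|qx] := eqVneq q x; last exact: via_y.
subst q; apply: (IH (s := [:: y, x & s]) hN).
  by rewrite active_walk_cons /adjG huy /active_step nyu andbF uC.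
by move=> _; rewrite on_xy_l.
Qed.

(* Symmetrically, a walk [u -> y <- x] from a parent [u] of [y] is rerouted
   through [u -> x] or shortcut after [y]. *)
Lemma reach_through_y_x into u s : (size s).+1 < N -> (u, y) \in E -> u != x ->
  cwalk E into u [:: y, x & s] -> reach_by E1 C into u (last x s).
Proof.
move=> hN huy ux; rewrite !active_walk_cons huy covered_yx.
case/and5P=> _ step_uy _ step_yx act.
have hux := parent_y_parent_x huy ux; have /andP [_ uy] := parent_x_neq hux.
have nyu := negbTE (dag_asym dagE huy).
move: step_uy step_yx; rewrite /active_step nyu andbF hxy /= => uC yC.
have entry_u v : into -> ~~ on_xy u v by move=> _; rewrite on_xy_l.
have adj_uy : adjG E u y by rewrite /adjG huy.
have step_uy : active_step E [in C] C into u y by rewrite /active_step nyu andbF.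
case: s hN act => [|r s] hN.
  move=> _; apply: (reach_by_cons (n := x)); first by rewrite adj_reverse /adjG hux.
    by rewrite /active_step reverse_edgeEr // (negbTE (dag_asym dagE hux)) andbF.
  exact: reach_by_nil.
rewrite active_walk_cons => /and3P [adj_xr]; rewrite /active_step /= => xC act.
have [eyr|ry] := eqVneq r y.
  subst r; rewrite hxy in act; apply: (IH (s := y :: s) (ltnW hN) _ (entry_u _)).
  by rewrite active_walk_cons adj_uy step_uy huy.
case: (boolP ((r, x) \in E)) => hrx.
  have hry := parent_x_parent_y hrx; rewrite (negbTE (dag_asym dagE hrx)) in act.
  apply: (IH (s := [:: y, r & s]) hN _ (entry_u _)).
  rewrite !active_walk_cons adj_uy step_uy huy /adjG hry orbT /active_step hry /=.
  by rewrite (negbTE (dag_asym dagE hry)) yC act.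
have hxr : (x, r) \in E by move: adj_xr; rewrite /adjG (negbTE hrx) orbF.
rewrite hxr in act; apply: (IH (s := [:: x, r & s]) hN _ (entry_u _)).
rewrite !active_walk_cons /adjG hux hxr /active_step (negbTE (dag_asym dagE hux)).
by rewrite andbF uC (negbTE hrx) xC act.
Qed.

End Transfer.

Lemma reverse_covered_reach (C : {set V}) into u s :
  active_walk E [in C] C into u s -> (into -> ~~ on_xy u (head u s)) ->
  reach_by E1 C into u (last u s).
Proof.
move: {2}(size s).+1 (ltnSn (size s)) => N.
elim: N into u s => // N IH into u s hN act entry.
case: s hN act entry => [|v s] hN act /= entry; first exact: reach_by_nil.
have {}hN : size s < N by rewrite -ltnS.
have [xy_uv|nxy] := boolP (on_xy u v).
  have into_f : into = false by apply/negbTE/negP => /entry; rewrite xy_uv.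
  subst into; case/orP: xy_uv => /eqP [eu ev]; subst u v.
    exact: (reach_from_x_y (C := C) IH hN act).
  exact: (reach_from_y_x (C := C) IH hN act).
have [/andP [huv]|ok] := boolP (((u, v) \in E) && on_xy v (head v s)); last first.
  by apply: (reach_step (C := C) IH hN nxy _ act) => huv; apply: contra ok => ->; rewrite huv.
case: s hN act => [|w s] hN act; first by rewrite on_xy_refl.
case/orP=> /eqP [ev ew]; subst v w.
  exact: (reach_through_x_y (C := C) IH hN huv act).
apply: (reach_through_y_x (C := C) IH hN huv _ act).
by move: nxy; rewrite /on_xy !xpair_eqE eqxx andbT [y == x]eq_sym covered_neq andbF orbF.
Qed.

Lemma dconnected_reverse (C : {set V}) a b : a \notin C ->
  dconnected E C a b -> dconnected E1 C a b.
Proof.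
move=> aC /(dconnected_cwalkP dagE _ aC) [s [act <-]].
have entry : false -> ~~ on_xy a (head a s) by [].
have [s1 [act1 <-]] := reverse_covered_reach act entry.
by apply/(dconnected_cwalkP reverse_dag _ aC); exists s1.
Qed.

End CoveredEdge.

Section CoveredDifference.
Variables (V : finType) (E E' : {set V * V}).
Hypotheses (dagE : is_dag E) (dagE' : is_dag E') (equiv : markov_equiv E E').

Local Notation rank v := #|ancestors E v|.

Lemma diff_reversed a b : (a, b) \in E :\: E' -> (b, a) \in E'.
Proof.
rewrite inE => /andP [nab hab]; have : adjG E' a b by rewrite -equiv.1 /adjG hab.
by rewrite /adjG (negbTE nab).
Qed.

Variables (X Y : V).
Hypothesis hXY : (X, Y) \in E :\: E'.
Hypothesis minY : forall u v, (u, v) \in E :\: E' -> rank Y <= rank v.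
Hypothesis maxX : forall u, (u, Y) \in E :\: E' -> rank u <= rank X.

Let hXY_E : (X, Y) \in E. Proof. by move: hXY; rewrite inE => /andP []. Qed.
Let hXY_E' : (X, Y) \notin E'. Proof. by move: hXY; rewrite inE => /andP []. Qed.

Lemma diff_parent_Y z : (z, Y) \in E -> z != X -> (z, X) \in E.
Proof.
move=> hzY zX.
have /orP [//|hXz] : adjG E z X.
  apply/negPn/negP => nadj; have : vstructure E z Y X by rewrite /vstructure hzY hXY_E zX nadj.
  by rewrite equiv.2 /vstructure (negbTE hXY_E') andbF.
have hzY' : (z, Y) \in E'.
  apply/negPn/negP => nzY; have : rank z <= rank X by apply: maxX; rewrite inE nzY hzY.
  by rewrite leqNgt (card_ancestors_edge dagE hXz).
have hXz' : (X, z) \in E'.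
  apply/negPn/negP => nXz; have : rank Y <= rank z by apply: (minY (u := X)); rewrite inE nXz hXz.
  by rewrite leqNgt (card_ancestors_edge dagE hzY).
have /negP[] := dagE' (diff_reversed hXY).
exact: connect_trans (connect1 hXz') (connect1 hzY').
Qed.

Lemma diff_parent_X z : (z, X) \in E -> (z, Y) \in E.
Proof.
move=> hzX; have hYX' := diff_reversed hXY.
have zY : z != Y by apply: contraTneq hzX => ->; apply: dag_asym.
have /orP [//|hYz] : adjG E z Y.
  apply/negPn/negP => nadj.
  have hzX' : (z, X) \in E'.
    apply/negPn/negP => nzX; have : rank Y <= rank X by apply: (minY (u := z)); rewrite inE nzX hzX.
    by rewrite leqNgt (card_ancestors_edge dagE hXY_E).
  have : vstructure E' z X Y by rewrite /vstructure hzX' hYX' zY -equiv.1 nadj.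
  by rewrite -equiv.2 /vstructure (negbTE (dag_asym dagE hXY_E)) andbF.
have /negP[] := dagE hzX.
exact: connect_trans (connect1 hXY_E) (connect1 hYz).
Qed.

End CoveredDifference.

(* Chickering's lemma: two distinct Markov equivalent DAGs differ by a
   reversible covered edge. *)
Lemma exists_covered_diff (V : finType) (E E' : {set V * V}) :
  is_dag E -> is_dag E' -> markov_equiv E E' -> E :\: E' != set0 ->
  exists x y, [/\ (x, y) \in E, (x, y) \notin E' &
    forall z, ((z, y) \in E) = ((z, x) \in E) || (z == x)].
Proof.
move=> dagE dagE' equiv /set0Pn [[u0 v0] he0].
have hv0 : [exists u, (u, v0) \in E :\: E'] by apply/existsP; exists u0.
case: (@arg_minnP _ v0 (fun v => [exists u, (u, v) \in E :\: E'])
  (fun v => #|ancestors E v|) hv0) => Y /existsP [u1 hu1] minY.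
case: (@arg_maxnP _ u1 (fun u => (u, Y) \in E :\: E')
  (fun u => #|ancestors E u|) hu1) => X hXY maxX.
have hXY_E : (X, Y) \in E by move: hXY; rewrite inE => /andP [].
exists X, Y; split => [||z]; first by [].
  by move: hXY; rewrite inE => /andP [].
have minY' u v : (u, v) \in E :\: E' -> #|ancestors E Y| <= #|ancestors E v|.
  by move=> huv; apply: minY; apply/existsP; exists u.
have [->|zX] := eqVneq z X; first by rewrite hXY_E orbT.
rewrite orbF; apply/idP/idP => [hzY|hzX].
  exact: (diff_parent_Y (X := X) (Y := Y) dagE dagE' equiv hXY minY' maxX hzY zX).
exact: (diff_parent_X (X := X) (Y := Y) dagE equiv hXY minY' hzX).
Qed.

Lemma eq_of_markov_equiv (V : finType) (E E' : {set V * V}) :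
  is_dag E' -> markov_equiv E E' -> E :\: E' = set0 -> E = E'.
Proof.
move=> dagE' [adj_eq _] /setP diff0.
have sub : E \subset E'.
  by apply/subsetP => e he; apply/negPn/negP => ne; have := diff0 e; rewrite !inE ne he.
apply/eqP; rewrite eqEsubset sub; apply/subsetP => -[u v] huv.
have /orP [//|/(subsetP sub) hvu] : adjG E u v by rewrite adj_eq /adjG huv.
by rewrite (negbTE (dag_asym dagE' huv)) in hvu.
Qed.

(* Reversing covered edges one at a time leads from [E] to [E']. *)
Lemma markov_equiv_dconnected (V : finType) (E E' : {set V * V}) (C : {set V}) a b :
  is_dag E -> is_dag E' -> markov_equiv E E' -> a \notin C ->
  dconnected E C a b -> dconnected E' C a b.
Proof.
move=> + dagE' + aC; move: {2}#|E :\: E'| (leqnn #|E :\: E'|) => n.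
elim: n E => [|n IH] E card_diff dagE equiv.
  have /eqP/(eq_of_markov_equiv dagE' equiv) -> // : E :\: E' == set0.
  by rewrite -cards_eq0 -leqn0.
have [/eqP/(eq_of_markov_equiv dagE' equiv) -> //|ne0] := boolP (E :\: E' == set0).
have [x [y [hxy nxy' covered]]] := exists_covered_diff dagE dagE' equiv ne0.
set E1 := reverse_edge E x y => /(dconnected_reverse dagE hxy covered aC).
have hxy_diff : (x, y) \in E :\: E' by rewrite inE nxy' hxy.
have sub : E1 :\: E' \subset (E :\: E') :\ (x, y).
  apply/subsetP => e; rewrite !inE => /andP [ne' /orP [/andP [nxy eE]|/eqP ee]].
    by rewrite nxy ne' eE.
  by rewrite ee (diff_reversed equiv hxy_diff) in ne'.
apply: IH; last first.
- exact: markov_equiv_trans (reverse_markov_equiv dagE hxy covered) equiv.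
- exact: reverse_dag dagE hxy covered.
rewrite -ltnS; apply: leq_ltn_trans (subset_leq_card sub) _.
by move: card_diff; rewrite (cardsD1 (x, y) (E :\: E')) hxy_diff.
Qed.

Section JGInclusion.
Variables (V : finType) (E E' : {set V * V}).
Hypothesis dagE : is_dag E.
Hypothesis adj_eq : forall u v, adjG E u v = adjG E' u v.
Hypothesis JG_incl : incl (JG E) (JG E').

(* Separating [a] and [b] by [sepset E a b] in [E'] forces the colliders of
   [E] and [E'] at [c] to agree. *)
Lemma collider_of_JG_incl a c b : a != b -> ~~ adjG E a b ->
  adjG E a c -> adjG E c b ->
  ((a, c) \in E) && ((b, c) \in E) = ((a, c) \in E') && ((b, c) \in E').
Proof.
move=> nab nadj ac cb.
have [_ /dsep_pair sep'] := JG_incl (JG_sepset dagE nab nadj).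
have cS := sepset_collider dagE ac cb.
have [nac ncb] := (dag_adj_neq dagE ac, dag_adj_neq dagE cb).
case col: (_ && _); case col': (_ && _) => //; exfalso; apply: sep'.
all: apply: (dconnected_via (c := c)); rewrite -?adj_eq ?col' //.
  by rewrite cS col.
by apply: desc_in_self; rewrite cS col.
Qed.

Lemma vstructure_of_JG_incl a c b : vstructure E a c b = vstructure E' a c b.
Proof.
rewrite /vstructure -adj_eq.
case nab: (a != b); last by rewrite !andbF.
case nadj: (~~ adjG E a b); last by rewrite !andbF.
rewrite !andbT.
have [ac|nac] := boolP (adjG E a c); last first.
  have hac : ((a, c) \in E) = false by apply: contraNF nac => hac; rewrite /adjG hac.
  have hac' : ((a, c) \in E') = false.
    by apply: contraNF nac => hac'; rewrite adj_eq /adjG hac'.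
  by rewrite hac hac'.
have [cb|ncb] := boolP (adjG E c b); last first.
  have hbc : ((b, c) \in E) = false by apply: contraNF ncb => hbc; rewrite /adjG hbc orbT.
  have hbc' : ((b, c) \in E') = false.
    by apply: contraNF ncb => hbc'; rewrite adj_eq /adjG hbc' orbT.
  by rewrite hbc hbc' !andbF.
exact: collider_of_JG_incl.
Qed.

Lemma markov_equiv_of_JG_incl : markov_equiv E E'.
Proof. by split=> // a c b; exact: vstructure_of_JG_incl. Qed.

End JGInclusion.

Lemma JG_incl_of_markov_equiv (V : finType) (E E' : {set V * V}) :
  is_dag E -> is_dag E' -> markov_equiv E E' -> incl (JG E') (JG E).
Proof.
move=> dagE dagE' equiv A B C [[disjAB disjAC disjBC] sep']; split => // a b ha hb.
have aC : a \notin C by rewrite (disjointFr disjAC ha).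
by move/(markov_equiv_dconnected dagE dagE' equiv aC); exact: sep'.
Qed.

Lemma JG_incl_subgraph (V : finType) (E E' : {set V * V}) :
  is_dag E -> is_dag E' -> E' \subset E -> incl (JG E) (JG E').
Proof.
move=> dagE dagE' subE A B C [[disjAB disjAC disjBC] sep]; split => // a b ha hb.
have aC : a \notin C by rewrite (disjointFr disjAC ha).
by move/(dconnected_subgraph dagE subE dagE' aC); exact: sep.
Qed.

Section Minimality.
Variables (V : finType) (P : ci_relation V) (E : {set V * V}).
Hypothesis dagE : is_dag E.

Lemma adj_of_skP G a b : is_dag G -> markovian P G -> skP P a b -> adjG G a b.
Proof.
move=> dagG markovG [nab nsep]; apply/negPn/negP => nadj; apply: nsep.
exists (sepset G a b); split; first exact: sepset_sub.
exact: markovG (JG_sepset dagG nab nadj).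
Qed.

Lemma minimally_markovian_sparsest : minimally_markovian P E -> sparsest_markov P E.
Proof.
move=> [markovE faithful]; split=> //; split=> // E' dagE' markovE'.
apply: card_le_of_adj_sub dagE _ => u v /faithful; exact: adj_of_skP.
Qed.

Lemma sparsest_pearl_minimal : sparsest_markov P E -> pearl_minimal P E.
Proof.
move=> [_ [markovE sparsest]]; split=> //.
case=> E' [dagE' [JG_incl [A [B [C [JG'ABC nJGABC]]]]] markovE'].
have adj' u v : adjG E' u v -> adjG E u v.
  by move=> huv; apply: adj_of_JG_incl dagE JG_incl (dag_adj_neq dagE' huv) huv.
have adj_eq u v : adjG E u v = adjG E' u v.
  apply/idP/idP; last exact: adj'.
  exact: (adj_sub_of_card_le dagE' adj' (sparsest _ dagE' markovE')).
apply/nJGABC/(JG_incl_of_markov_equiv dagE dagE') => //.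
exact: markov_equiv_of_JG_incl.
Qed.

Lemma pearl_causally_minimal : pearl_minimal P E -> causally_minimal P E.
Proof.
move=> [markovE nE']; split=> // E' dagE' ltE' markovE'; apply: nE'.
exists E'; split=> //; split; first exact: JG_incl_subgraph (proper_sub ltE').
case/properP: ltE' => subE [[u v] huv nuv'].
have nuv : u != v by apply: (dag_adj_neq dagE); rewrite /adjG huv.
have nadj' : ~~ adjG E' u v.
  rewrite /adjG (negbTE nuv') /=; apply: contraTN huv => /(subsetP subE).
  exact: (dag_asym dagE).
exists [set u], [set v], (sepset E' u v); split; first exact: JG_sepset.
by case=> _ /dsep_pair; apply; exact: dconnected_edge.
Qed.

End Minimality.

Theorem proposition1 (V : finType) (P : ci_relation V) (E : {set V * V})
    (hG : is_dag E) :
  (minimally_markovian P E -> sparsest_markov P E) /\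
  (sparsest_markov P E -> pearl_minimal P E) /\
  (pearl_minimal P E -> causally_minimal P E).
Proof.
split; first exact: minimally_markovian_sparsest.
by split; [exact: sparsest_pearl_minimal | exact: pearl_causally_minimal].
Qed.
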